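(* The radical $\mathcal{V}(D)$ of the form $\langle\cdot,\cdot\rangle$ is an ideal of $\mathcal{A}(D)$.
   Context: Let $G$ be a group generated by a conjugacy class $D$ of involutions such that for all $d,e\in D$ the order of $de$ is $1$, $2$ or $3$. Lines of the Fischer space on $D$ are triples $\{d,e,d^e\}$ with $d,e\in D$ non-commuting. $\mathcal{A}(D)$ is the $\mathbb{F}_2$-vector space with basis $D$ (finite subsets of $D$ under symmetric difference), with bilinear product determined by $d*e=d+e+f$ if $\{d,e,f\}$ is a line and $d*e=0$ otherwise. The bilinear form $\langle\cdot,\cdot\rangle$ on $\mathcal{A}(D)$ is determined by $\langle d,e\rangle=1$ if $d,e$ do not commute and $0$ otherwise; $\mathcal{V}(D)=\{u: \langle u,w\rangle=0\ \forall w\}$. *)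

From HB Require Import structures.
From mathcomp Require Import all_boot finmap.
From mathcomp Require Import monoid.

Set Implicit Arguments.
Unset Strict Implicit.
Unset Printing Implicit Defensive.

Local Open Scope fset_scope.

Section FischerAlgebra.
Variable G : groupType.

Definition gcommute (x y : G) : bool := (x * y == y * x)%g.

Definition has_order (x : G) (n : nat) : Prop :=
  (0 < n)%N /\ (x ^+ n)%g = 1%g /\ forall m, (0 < m < n)%N -> (x ^+ m)%g <> 1%g.

Definition involution (x : G) : Prop := (x ^+ 2)%g = 1%g /\ x <> 1%g.

Definition is_conj_class (D : G -> Prop) : Prop :=
  exists d0 : G, forall x : G, D x <-> exists h : G, x = (d0 ^ h)%g.

(* G is generated by D: every element is a finite product of elements of D
   (D consists of involutions, so inverses are not needed; the empty product is 1). *)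
Definition generates (D : G -> Prop) : Prop :=
  forall g : G, exists s : seq G,
    (forall x, x \in s -> D x) /\ g = foldr (fun x y => (x * y)%g) 1%g s.

Definition orders_123 (D : G -> Prop) : Prop :=
  forall d e, D d -> D e -> exists2 n, n \in [:: 1; 2; 3]%N & has_order (d * e)%g n.

(* Elements of A(D): finite subsets of D (F_2-vectors with basis D). *)
Definition inA (D : G -> Prop) (u : {fset G}) : Prop := forall x, x \in u -> D x.

(* addition in A(D) = symmetric difference *)
Definition symdiff (A B : {fset G}) : {fset G} := (A `\` B) `|` (B `\` A).

Definition vsum (s : seq G) (F : G -> {fset G}) : {fset G} :=
  foldr (fun x acc => symdiff (F x) acc) fset0 s.

(* product of basis elements: d*e = d + e + d^e if {d,e,d^e} is a line
   (i.e. d, e do not commute), and 0 otherwise *)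
Definition bmul (d e : G) : {fset G} :=
  if gcommute d e then fset0
  else symdiff [fset d] (symdiff [fset e] [fset (d ^ e)%g]).

Definition amul (u w : {fset G}) : {fset G} :=
  vsum (enum_fset u) (fun d => vsum (enum_fset w) (fun e => bmul d e)).

(* bilinear form: <d,e> = 1 iff d,e do not commute; value in F_2 as bool *)
Definition aform (u w : {fset G}) : bool :=
  odd (\sum_(d <- enum_fset u) \sum_(e <- enum_fset w) (~~ gcommute d e : nat)).

Definition inV (D : G -> Prop) (u : {fset G}) : Prop :=
  inA D u /\ forall w, inA D w -> aform u w = false.

Definition is_ideal (D : G -> Prop) (I : {fset G} -> Prop) : Prop :=
  (forall u, I u -> inA D u) /\
  I fset0 /\
  (forall u v, I u -> I v -> I (symdiff u v)) /\
  (forall u w, I u -> inA D w -> I (amul u w) /\ I (amul w u)).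

End FischerAlgebra.

(** The form is associative, <u*w, x> = <u, w*x>, and the product is
    commutative up to the form, <u*w, x> = <w*u, x>.  Both identities are
    trilinear, so it suffices to check them on basis vectors d, e, f of D;
    there they follow from the facts that non-commuting d, e in D satisfy
    d^e = e^d (de has order 3) and that commuting with d is invariant under
    conjugation.  Hence if u lies in the radical, so do u*w and w*u. *)

From mathcomp Require Import all_boot finmap.
From mathcomp Require Import monoid.

Set Implicit Arguments.
Unset Strict Implicit.
Unset Printing Implicit Defensive.

Local Open Scope fset_scope.

Section InvolutionPairs.
Variable G : groupType.
Implicit Types x y g : G.

Lemma gcommuteC x y : gcommute x y = gcommute y x.
Proof. by rewrite /gcommute eq_sym. Qed.

Lemma gcommuteJ x y g : gcommute (x ^ g)%g (y ^ g)%g = gcommute x y.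
Proof. by rewrite /gcommute -!conjMg (inj_eq (@conjg_inj _ g)). Qed.

Lemma conjg_gcommute x y : gcommute x y -> (x ^ y)%g = x.
Proof. by move/eqP=> cxy; rewrite conjgE cxy mulKg. Qed.

Lemma conjgKinvol x y : (y * y = 1)%g -> ((x ^ y) ^ y)%g = x.
Proof. by move=> yy1; rewrite -conjgM yy1 conjg1. Qed.

Lemma invol_invg x : (x * x = 1)%g -> (x^-1 = x)%g.
Proof. exact: mulg1_eq. Qed.

Lemma invol_order2_gcommute x y : (x * x = 1)%g -> (y * y = 1)%g ->
  ((x * y) ^+ 2 = 1)%g -> gcommute x y.
Proof.
move=> xx1 yy1; rewrite expg2 => /mulg1_eq.
by rewrite invgM !invol_invg // /gcommute => <-.
Qed.

Lemma invol_order3_conjgC x y : (x * x = 1)%g -> (y * y = 1)%g ->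
  ((x * y) ^+ 3 = 1)%g -> (x ^ y)%g = (y ^ x)%g.
Proof.
move=> xx1 yy1 xy3.
have /mulg1_eq : (x * (y * x) * (y * (x * y)) = 1)%g.
  by rewrite -xy3 !expgSS expg1 !mulgA.
rewrite !invgM !invol_invg // => yxy.
by rewrite !conjgE !invol_invg // -yxy !mulgA.
Qed.

End InvolutionPairs.

Section FormLinearity.
Variable G : groupType.
Implicit Types (d e f : G) (A B u w x : {fset G}).

Lemma big_addb_symdiff A B (h : G -> bool) :
  \big[addb/false]_(y <- symdiff A B) h y =
  \big[addb/false]_(y <- A) h y (+) \big[addb/false]_(y <- B) h y.
Proof.
rewrite (big_fsetID _ (fun y => y \in A) (symdiff A B)).
rewrite (big_fsetID _ (fun y => y \in B) A) (big_fsetID _ (fun y => y \in A) B).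
have eAB : [fset y in symdiff A B | y \in A] =i [fset y in A | y \notin B].
  by move=> y; rewrite /symdiff !inE /=; case: (y \in A); case: (y \in B).
have eBA : [fset y in symdiff A B | y \notin A] =i [fset y in B | y \notin A].
  by move=> y; rewrite /symdiff !inE /=; case: (y \in A); case: (y \in B).
have eI : [fset y in A | y \in B] =i [fset y in B | y \in A].
  by move=> y; rewrite !inE /=; case: (y \in A); case: (y \in B).
by rewrite (eq_fbigl _ _ eAB) (eq_fbigl _ _ eBA) (eq_fbigl _ _ eI) addbACA addbb.
Qed.

Lemma big_addb_vsum (s : seq G) (F : G -> {fset G}) (h : G -> bool) :
  \big[addb/false]_(y <- vsum s F) h y =
  \big[addb/false]_(z <- s) \big[addb/false]_(y <- F z) h y.
Proof.
elim: s => [|z s IH] /=; first by rewrite big_seq_fset0 big_nil.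
by rewrite big_addb_symdiff IH big_cons.
Qed.

Lemma aformE u w :
  aform u w = \big[addb/false]_(d <- u) \big[addb/false]_(e <- w) ~~ gcommute d e.
Proof.
have odd_add := big_morph odd oddD (erefl : odd 0 = false).
rewrite /aform odd_add; apply: eq_bigr => d _.
by rewrite odd_add; apply: eq_bigr => e _; rewrite oddb.
Qed.

Lemma aform_symdiffl A B w : aform (symdiff A B) w = aform A w (+) aform B w.
Proof. by rewrite !aformE big_addb_symdiff. Qed.

Lemma aform_vsuml (s : seq G) (F : G -> {fset G}) w :
  aform (vsum s F) w = \big[addb/false]_(z <- s) aform (F z) w.
Proof. by rewrite aformE big_addb_vsum; apply: eq_bigr => z _; rewrite aformE. Qed.

Lemma aform_vsumr u (s : seq G) (F : G -> {fset G}) :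
  aform u (vsum s F) = \big[addb/false]_(z <- s) aform u (F z).
Proof.
rewrite aformE (eq_bigr _ (fun d _ => big_addb_vsum _ _ _)) exchange_big.
by apply: eq_bigr => z _; rewrite aformE.
Qed.

Lemma aform_sum1l u w : aform u w = \big[addb/false]_(d <- u) aform [fset d] w.
Proof. by rewrite aformE; apply: eq_bigr => d _; rewrite aformE big_seq_fset1. Qed.

Lemma aform_sum1r u w : aform u w = \big[addb/false]_(f <- w) aform u [fset f].
Proof.
rewrite aformE exchange_big; apply: eq_bigr => f _.
by rewrite aformE; apply: eq_bigr => d _; rewrite big_seq_fset1.
Qed.

Lemma aform_bmul1 d e f : aform (bmul d e) [fset f] =
  ~~ gcommute d e && (~~ gcommute d f (+) ~~ gcommute e f (+) ~~ gcommute (d ^ e)%g f).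
Proof.
rewrite aformE /bmul; case: ifP => _; first by rewrite big_seq_fset0.
by rewrite !big_addb_symdiff !big_seq_fset1 addbA.
Qed.

Lemma aform1_bmul d e f : aform [fset d] (bmul e f) =
  ~~ gcommute e f && (~~ gcommute d e (+) ~~ gcommute d f (+) ~~ gcommute d (e ^ f)%g).
Proof.
rewrite aformE big_seq_fset1 /bmul; case: ifP => _; first by rewrite big_seq_fset0.
by rewrite !big_addb_symdiff !big_seq_fset1 addbA.
Qed.

End FormLinearity.

Section RadicalIdeal.
Variables (G : groupType) (D : G -> Prop).
Hypothesis D_conjg : forall x g, D x -> D (x ^ g)%g.
Hypothesis D_invol : forall x, D x -> (x * x = 1)%g.
Hypothesis D_conjgC : forall x y, D x -> D y -> ~~ gcommute x y -> (x ^ y)%g = (y ^ x)%g.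
Implicit Types (d e f : G) (u w x : {fset G}).

Lemma aform_bmul_assoc1 d e f : D d -> D e -> D f ->
  aform (bmul d e) [fset f] = aform [fset d] (bmul e f).
Proof.
move=> Dd De Df; rewrite aform_bmul1 aform1_bmul.
case cde: (gcommute d e); case cef: (gcommute e f) => //=.
- have -> : gcommute d (e ^ f)%g = gcommute d f.
    by rewrite D_conjgC ?cef // -{1}(conjg_gcommute cde) gcommuteJ.
  by rewrite addbb.
- have cfe : gcommute f e by rewrite gcommuteC.
  have -> : gcommute (d ^ e)%g f = gcommute d f.
    by rewrite -{1}(conjg_gcommute cfe) gcommuteJ.
  by rewrite addbF addbb.
- (* Conjugating by e sends (d^e, f) to (d, f^e), and f^e = e^f. *)
  have -> : gcommute (d ^ e)%g f = gcommute d (e ^ f)%g.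
    rewrite -(gcommuteJ _ _ e) conjgKinvol ?D_invol // (D_conjgC Df De) //.
    by rewrite gcommuteC cef.
  by case: (gcommute d f); case: (gcommute d (e ^ f)%g).
Qed.

Lemma aform_bmulC d e x : D d -> D e -> aform (bmul d e) x = aform (bmul e d) x.
Proof.
move=> Dd De; rewrite [LHS]aform_sum1r [RHS]aform_sum1r.
apply: eq_bigr => f _; rewrite !aform_bmul1 (gcommuteC e d).
case cde: (gcommute d e) => //=.
by rewrite (D_conjgC Dd De) ?cde // (addbC (~~ gcommute d f)).
Qed.

Lemma aform_amul_assoc u w x : inA D u -> inA D w -> inA D x ->
  aform (amul u w) x = aform u (amul w x).
Proof.
move=> Du Dw Dx; rewrite /amul aform_vsuml aform_vsumr.
under eq_big_seq => d ud.
  rewrite aform_vsuml.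
  under eq_big_seq => e we do
    rewrite aform_sum1r (eq_big_seq _ (fun f xf =>
      aform_bmul_assoc1 (Du d ud) (Dw e we) (Dx f xf))).
  over.
under [RHS]eq_bigr => e _.
  rewrite aform_vsumr.
  under eq_bigr => f _ do rewrite aform_sum1l.
  over.
by rewrite exchange_big; apply: eq_bigr => e _; rewrite exchange_big.
Qed.

Lemma aform_amulC u w x : inA D u -> inA D w ->
  aform (amul u w) x = aform (amul w u) x.
Proof.
move=> Du Dw; rewrite /amul !aform_vsuml.
under eq_big_seq => d ud.
  rewrite aform_vsuml.
  under eq_big_seq => e we do rewrite (aform_bmulC _ (Du d ud) (Dw e we)).
  over.
by rewrite exchange_big; apply: eq_bigr => e _; rewrite aform_vsuml.
Qed.

Lemma inA_symdiff u w : inA D u -> inA D w -> inA D (symdiff u w).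
Proof.
by move=> Du Dw y; rewrite /symdiff !inE => /orP[] /andP[_]; [apply: Du | apply: Dw].
Qed.

Lemma inA_vsum (s : seq G) (F : G -> {fset G}) :
  (forall z, z \in s -> inA D (F z)) -> inA D (vsum s F).
Proof.
elim: s => [|z s IH] /= DF; first by move=> y; rewrite inE.
apply: inA_symdiff; first by apply: DF; rewrite mem_head.
by apply: IH => z' sz'; apply: DF; rewrite in_cons sz' orbT.
Qed.

Lemma inA_bmul d e : D d -> D e -> inA D (bmul d e).
Proof.
move=> Dd De; rewrite /bmul; case: ifP => _; first by move=> y; rewrite inE.
by apply: inA_symdiff; last apply: inA_symdiff; move=> y; rewrite inE => /eqP ->; auto.
Qed.

Lemma inA_amul u w : inA D u -> inA D w -> inA D (amul u w).
Proof.
move=> Du Dw; apply: inA_vsum => d ud; apply: inA_vsum => e we.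
exact: inA_bmul (Du d ud) (Dw e we).
Qed.

Lemma inV_amul u w : inV D u -> inA D w -> inV D (amul u w) /\ inV D (amul w u).
Proof.
move=> [Du u_rad] Dw.
have uwV : inV D (amul u w).
  split=> [|x Dx]; first exact: inA_amul.
  by rewrite aform_amul_assoc //; apply: u_rad; apply: inA_amul.
split=> //; split=> [|x Dx]; first exact: inA_amul.
by rewrite aform_amulC // uwV.2.
Qed.

End RadicalIdeal.

Lemma inV0 (G : groupType) (D : G -> Prop) : inV D fset0.
Proof. by split=> [y|w _]; rewrite ?inE // aformE big_seq_fset0. Qed.

Lemma inV_symdiff (G : groupType) (D : G -> Prop) u w :
  inV D u -> inV D w -> inV D (symdiff u w).
Proof.
move=> [Du u_rad] [Dw w_rad]; split=> [|x Dx]; first exact: inA_symdiff.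
by rewrite aform_symdiffl u_rad // w_rad.
Qed.

Lemma conj_class_conjg_closed (G : groupType) (D : G -> Prop) :
  is_conj_class D -> forall x g, D x -> D (x ^ g)%g.
Proof.
move=> [d0 Dcl] x g /Dcl [h ->]; apply/Dcl; exists (h * g)%g; by rewrite conjgM.
Qed.

Lemma orders_123_conjgC (G : groupType) (D : G -> Prop) :
  (forall d, D d -> (d * d = 1)%g) -> orders_123 D ->
  forall x y, D x -> D y -> ~~ gcommute x y -> (x ^ y)%g = (y ^ x)%g.
Proof.
move=> D_invol D123 x y Dx Dy nxy.
have [xx1 yy1] := (D_invol x Dx, D_invol y Dy).
have [n n123 [_ [xyn _]]] := D123 x y Dx Dy.
move: n123; rewrite !inE => /or3P[] /eqP nE; rewrite nE in xyn.
- have xy2 : ((x * y) ^+ 2 = 1)%g by rewrite expg1 in xyn; rewrite expg2 xyn mulg1.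
  by rewrite (invol_order2_gcommute xx1 yy1 xy2) in nxy.
- by rewrite (invol_order2_gcommute xx1 yy1 xyn) in nxy.
- exact: invol_order3_conjgC.
Qed.

Theorem corollary2p2 (G : groupType) (D : G -> Prop) :
  is_conj_class D ->
  (forall d, D d -> involution d) ->
  generates D ->
  orders_123 D ->
  is_ideal D (inV D).
Proof.
move=> Dcl Dinvol _ D123.
have D_conjg := conj_class_conjg_closed Dcl.
have D_invol : forall x, D x -> (x * x = 1)%g by move=> x /Dinvol[x2 _]; rewrite -expg2.
have D_conjgC := orders_123_conjgC D_invol D123.
split; first by move=> u [].
split; first exact: inV0.
split; first exact: inV_symdiff.
by move=> u w; apply: inV_amul.
Qed.
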